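(* Let $A$ be a countable non-empty set of players, $C$ a finite non-empty set of choices, $d:C^*\to A$, and for each $a\in A$ let $f_a:C^\omega\to[0,1]$ be upper semi-continuous (with respect to the product of discrete topologies on $C^\omega$). Then the infinite sequential game $\langle A,C,d,(f_a)_{a\in A}\rangle$ has a Nash equilibrium.
   Context: A strategy of $a$ is a function $s_a:d^{-1}(\{a\})\to C$; a profile is identified with $\sigma:C^*\to C$, inducing the play $p(\sigma)$ with $p_n=\sigma(p_{<n})$. $\sigma_{a\mapsto s_a}$ agrees with $s_a$ on $d^{-1}(\{a\})$ and with $\sigma$ elsewhere. $\sigma$ is a Nash equilibrium if there is no player $a$ and strategy $s_a$ with $f_a(p(\sigma))<f_a(p(\sigma_{a\mapsto s_a}))$. *)

From mathcomp Require Import all_boot.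
From Stdlib Require Import Reals.
Set Implicit Arguments. Unset Strict Implicit. Unset Printing Implicit Defensive.

(* Histories C^* are [seq C]; plays C^omega are [nat -> C].
   A profile is sigma : seq C -> C. *)

Fixpoint hist (C : Type) (sigma : seq C -> C) (n : nat) : seq C :=
  match n with
  | 0 => [::]
  | n'.+1 => rcons (hist sigma n') (sigma (hist sigma n'))
  end.

Definition play (C : Type) (sigma : seq C -> C) : nat -> C :=
  fun n => sigma (hist sigma n).

Definition strategy (A : eqType) (C : Type) (d : seq C -> A) (a : A) : Type :=
  forall h : seq C, d h = a -> C.

Definition deviate (A : eqType) (C : Type) (d : seq C -> A) (sigma : seq C -> C)
  (a : A) (s : strategy d a) : seq C -> C :=
  fun h => match @eqP A (d h) a with
           | ReflectT e => s h e
           | ReflectF _ => sigma h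
           end.

Definition nash_equilibrium (A : eqType) (C : Type) (d : seq C -> A)
  (f : A -> (nat -> C) -> R) (sigma : seq C -> C) : Prop :=
  ~ exists (a : A) (s : strategy d a),
      (f a (play sigma) < f a (play (deviate sigma s)))%R.

(* Upper semi-continuity w.r.t. the product of discrete topologies on C^omega:
   basic neighbourhoods of p are the cylinders {q | q_i = p_i for i < n}. *)
Definition usc_cantor (C : Type) (g : (nat -> C) -> R) : Prop :=
  forall (p : nat -> C) (eps : R), (0 < eps)%R ->
    exists n : nat, forall q : nat -> C,
      (forall i, (i < n)%N -> q i = p i) -> (g q < g p + eps)%R.

From mathcomp Require Import all_boot zify.
From Stdlib Require Import Reals Lra Wf_nat Classical ClassicalEpsilon FunctionalExtensionality.
Set Implicit Arguments. Unset Strict Implicit. Unset Printing Implicit Defensive.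

(* Fix a player a and a threshold t.  Either the opponents of a can keep her payoff at most t,
   or a can secure more than t: by upper semi-continuity, {f_a <= t} is the intersection of the
   open sets {f_a < t + 1/(k+1)}, and outside a's winning region the opponents reach each of
   them through its attractor.  Along the equilibrium path the thresholds the opponents can
   enforce against a player only shrink, because where their infimum is not attained the mover
   keeps a strategy securing more than it; so at every node of the path each player can be
   held down to her payoff on the path, and a deviation is punished from the node where it
   happens. *)

Lemma ex_least (P : nat -> Prop) :
  (exists n, P n) -> exists n, P n /\ forall m, m < n -> ~ P m.
Proof.
move=> /(@dec_inh_nat_subset_has_unique_least_element P (fun n => classic (P n))).
move=> [n [[Pn min] _]]; exists n; split=> // m lt /min /leP.
by rewrite leqNgt lt.
Qed.

Definition least (P : nat -> Prop) : nat :=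
  epsilon (inhabits 0) (fun n => P n /\ forall m, m < n -> ~ P m).

Lemma leastP P : (exists n, P n) -> P (least P) /\ forall m, m < least P -> ~ P m.
Proof. by move=> /ex_least; apply: epsilon_spec. Qed.

Lemma least_le P n : P n -> least P <= n.
Proof.
move=> Pn; have [_ min] := leastP (ex_intro _ n Pn).
by rewrite leqNgt; apply/negP => lt; apply: min lt Pn.
Qed.

Lemma least_eq P n : P n -> (forall m, m < n -> ~ P m) -> least P = n.
Proof.
move=> Pn min; have [Pl _] := leastP (ex_intro _ n Pn).
apply/eqP; rewrite eqn_leq least_le //=; rewrite leqNgt; apply/negP => lt.
exact: min lt Pl.
Qed.

Lemma no_lex_descent (k r : nat -> nat) K :
  (forall n, k n <= K) -> (forall n, k n <= k n.+1) ->
  (forall n, k n.+1 = k n -> r n.+1 < r n) -> False.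
Proof.
move=> le_kK k_up r_down.
suff : forall j i n, K - k n <= j -> r n <= i -> False.
  by move=> /(_ (K - k 0) (r 0) 0 (leqnn _) (leqnn _)).
elim=> [|j IHj] i n; elim: i n => [|i IHi] n le_j le_i;
  have := k_up n; rewrite leq_eqVlt => /orP [/eqP e|lt].
- by have := r_down n (esym e); lia.
- by have := le_kK n.+1; lia.
- by apply: (IHi n.+1); [rewrite -e | have := r_down n (esym e); lia].
- by have := le_kK n.+1; lia.
- by have := r_down n (esym e); lia.
- by apply: (IHj (r n.+1) n.+1) => //; have := le_kK n.+1; lia.
- by apply: (IHi n.+1); [rewrite -e | have := r_down n (esym e); lia].
- by apply: (IHj (r n.+1) n.+1) => //; have := le_kK n.+1; lia.
Qed.

Lemma le_of_approx (x t : R) : (forall k, x < t + / INR k.+1)%R -> (x <= t)%R.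
Proof.
move=> close; apply: Rnot_lt_le => lt.
have [n Hn] := INR_archimed (x - t) 1 ltac:(lra).
have pos : (0 < INR n.+1)%R by apply: lt_0_INR; apply/ltP.
have : (/ INR n.+1 < x - t)%R.
  apply: (Rmult_lt_reg_l (INR n.+1)) => //; rewrite Rinv_r; rewrite ?S_INR; nra.
have := close n; lra.
Qed.

Lemma fin_uniform_bound (T : finType) (P : T -> nat -> Prop) :
  (forall x n m, n <= m -> P x n -> P x m) -> (forall x, exists n, P x n) ->
  exists N, forall x, P x N.
Proof.
move=> mono ex.
suff [N HN] : exists N, forall x, x \in enum T -> P x N.
  by exists N => x; apply: HN; rewrite mem_enum.
elim: (enum T) => [|y s [N HN]]; first by exists 0.
have [n Hn] := ex y; exists (maxn n N) => x; rewrite in_cons => /orP [/eqP ->|xs].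
  exact: mono (leq_maxl _ _) Hn.
exact: mono (leq_maxr _ _) (HN x xs).
Qed.

Lemma fin_total_min (T : finType) (x0 : T) (le : T -> T -> Prop) :
  (forall x y z, le x y -> le y z -> le x z) -> (forall x y, le x y \/ le y x) ->
  exists m, forall x, le m x.
Proof.
move=> trans total.
have refl x : le x x by case: (total x x).
suff [m Hm] : exists m, forall x, x \in enum T -> le m x.
  by exists m => x; apply: Hm; rewrite mem_enum.
elim: (enum T) => [|y s [m Hm]]; first by exists x0.
case: (total y m) => [ym|my]; [exists y | exists m] => x; rewrite in_cons => /orP [/eqP ->|xs] //.
- exact: trans ym (Hm x xs).
- exact: Hm.
Qed.

Lemma up_closed_total (P Q : R -> Prop) :
  (forall s s', P s -> (s <= s')%R -> P s') -> (forall s s', Q s -> (s <= s')%R -> Q s') ->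
  (forall s, P s -> Q s) \/ (forall s, Q s -> P s).
Proof.
move=> upP upQ; apply: NNPP => neither.
have [s1 [P1 nQ1]] : exists s, P s /\ ~ Q s.
  apply: NNPP => K; apply: neither; left => s Ps; apply: NNPP => nQ; apply: K; by exists s.
have [s2 [Q2 nP2]] : exists s, Q s /\ ~ P s.
  apply: NNPP => K; apply: neither; right => s Qs; apply: NNPP => nP; apply: K; by exists s.
case: (Rle_lt_dec s1 s2) => le; first exact: nP2 (upP _ _ P1 le).
exact: nQ1 (upQ _ _ Q2 (Rlt_le _ _ le)).
Qed.

Section Game.
Variables (A : eqType) (C : finType) (c0 : C) (d : seq C -> A) (f : A -> (nat -> C) -> R).
Hypothesis f_usc : forall a, usc_cantor (f a).

Let inhC : inhabited C := inhabits c0.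
Let inh_strategy : inhabited (seq C -> C) := inhabits (fun _ => c0).

Definition prefix (q : nat -> C) n : seq C := mkseq q n.
Local Notation extends q h := (prefix q (size h) = h :> seq C).

Lemma size_prefix q n : size (prefix q n) = n.
Proof. exact: size_mkseq. Qed.

Lemma prefixS q n : prefix q n.+1 = rcons (prefix q n) (q n).
Proof. exact: mkseqS. Qed.

Lemma nth_prefix q n i : i < n -> nth c0 (prefix q n) i = q i.
Proof. exact: nth_mkseq. Qed.

Lemma take_prefix q n i : i <= n -> take i (prefix q n) = prefix q i.
Proof.
move=> le; apply: (@eq_from_nth _ c0) => [|j].
  by rewrite size_take !size_prefix; case: ltngtP le => // ->.
rewrite size_take size_prefix => lt_j.
have lt_ji : j < i by move: lt_j; case: (ltnP i n) => // ni lt_jn; exact: leq_trans lt_jn ni.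
by rewrite nth_take // !nth_prefix // (leq_trans lt_ji le).
Qed.

Lemma prefix_play (s : seq C -> C) n : play s n = s (prefix (play s) n).
Proof.
rewrite {1}/play; congr s.
by elim: n => [|n IH] //=; rewrite prefixS -IH.
Qed.

Lemma extends_rcons q h c : extends q (rcons h c) -> extends q h /\ q (size h) = c.
Proof. by rewrite size_rcons prefixS => /rcons_inj [-> ->]. Qed.

Lemma agree_below q p n : prefix q n = prefix p n -> forall i, i < n -> q i = p i.
Proof. by move=> E i lt; rewrite -(nth_prefix q lt) E nth_prefix. Qed.

Lemma first_divergence (q p : nat -> C) :
  q <> p -> exists n, prefix q n = prefix p n /\ q n <> p n.
Proof.
move=> neq; have [n [qn min]] : exists n, q n <> p n /\ forall m, m < n -> ~ q m <> p m.
  apply: ex_least; apply: NNPP => same; apply: neq; apply: functional_extensionality => n.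
  by apply: NNPP => ne; apply: same; exists n.
exists n; split=> //; apply: (@eq_from_nth _ c0) => [|i]; rewrite !size_prefix // => lt.
by rewrite !nth_prefix //; apply: NNPP; apply: min.
Qed.

Definition play_from (h : seq C) (rho : seq C -> C) : nat -> C :=
  play (fun g => if size g < size h then nth c0 h (size g) else rho g).

Lemma play_from_extends h rho : extends (play_from h rho) h.
Proof.
apply: (@eq_from_nth _ c0) => [|i]; rewrite size_prefix // => lt.
by rewrite nth_prefix // /play_from prefix_play size_prefix lt.
Qed.

Lemma play_from_step h rho n : size h <= n -> play_from h rho n = rho (prefix (play_from h rho) n).
Proof. by move=> le; rewrite {1}/play_from prefix_play size_prefix ltnNge le. Qed.

Definition follows (who : A -> Prop) (s : seq C -> C) (h : seq C) (q : nat -> C) :=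
  forall n, size h <= n -> who (d (prefix q n)) -> q n = s (prefix q n).

Definition caps_with a tau h t := forall q, extends q h ->
  follows (fun b => b <> a) tau h q -> (f a q <= t)%R.
Definition caps a h t := exists tau, caps_with a tau h t.
Definition secures_with a sg h t := forall q, extends q h ->
  follows (fun b => b = a) sg h q -> (t < f a q)%R.
Definition secures a h t := exists sg, secures_with a sg h t.

Lemma caps_le a h s s' : caps a h s -> (s <= s')%R -> caps a h s'.
Proof. by move=> [tau H] le; exists tau => q E K; have := H q E K; lra. Qed.

Lemma not_caps_and_secures a h t : caps a h t -> secures a h t -> False.
Proof.
move=> [tau Htau] [sg Hsg].
pose rho g := if d g == a then sg g else tau g.
pose q := play_from h rho.
have E : extends q h := play_from_extends h rho.
suff : (t < f a q <= t)%R by lra.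
split; [apply: Hsg | apply: Htau] => // n le who;
  by rewrite /q play_from_step // {1}/rho; case: eqP.
Qed.

Lemma caps_own_child a h c s : d h = a -> caps a h s -> caps a (rcons h c) s.
Proof.
move=> dh [tau H]; exists tau => q /extends_rcons [E _] K; apply: H => // n le ne.
apply: K => //; move: le; rewrite size_rcons leq_eqVlt => /orP [/eqP en|//].
by case: ne; rewrite -en E.
Qed.

Lemma caps_opp_parent a h c s : d h <> a -> caps a (rcons h c) s -> caps a h s.
Proof.
move=> dh [tau H]; exists (fun g => if g == h then c else tau g) => q E K.
have qh : q (size h) = c by rewrite K ?E ?eqxx.
apply: H => [|n]; first by rewrite size_rcons prefixS E qh.
rewrite size_rcons => lt ne; rewrite K ?(ltnW lt) //.
by case: eqP => // Eh; move: lt; rewrite -Eh size_prefix ltnn.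
Qed.

Lemma secures_with_child a sg h c t :
  secures_with a sg h t -> (d h = a -> c = sg h) -> secures_with a sg (rcons h c) t.
Proof.
move=> H hc q /extends_rcons [E qh] K; apply: H => // n.
rewrite leq_eqVlt => /orP [/eqP <-|lt]; last by apply: K; rewrite size_rcons.
by rewrite E qh; apply: hc; rewrite -E.
Qed.

Lemma secures_with_prefix a sg t p m n : m <= n -> secures_with a sg (prefix p m) t ->
  (forall j, m <= j < n -> d (prefix p j) = a -> p j = sg (prefix p j)) ->
  secures_with a sg (prefix p n) t.
Proof.
elim: n => [|n IH] le H follow; first by move: le H; rewrite leqn0 => /eqP ->.
case: ltngtP le => // [lt _|<- _]; last exact: H.
rewrite ltnS in lt; rewrite prefixS; apply: secures_with_child => [|da].
  by apply: IH => // j /andP [mj jn]; apply: follow; rewrite mj ltnW.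
by apply: follow; rewrite // lt ltnSn.
Qed.

Lemma caps_eventually a p s : (f a p < s)%R -> exists N, forall n, N <= n -> caps a (prefix p n) s.
Proof.
move=> lt; have [N HN] := @f_usc a p (s - f a p)%R ltac:(lra).
exists N => n le; exists (fun _ => c0) => q E _; rewrite size_prefix in E.
suff : (f a q < f a p + (s - f a p))%R by lra.
by apply: HN => i iN; apply: (agree_below E); exact: leq_trans iN le.
Qed.

Definition secure_strategy a t h : seq C -> C :=
  epsilon inh_strategy (fun sg => secures_with a sg h t).

Lemma secure_strategyP a t h : secures a h t -> secures_with a (secure_strategy a t h) h t.
Proof. exact: epsilon_spec. Qed.

Section Determinacy.
Variables (a : A) (t : R).

Definition thr k := (t + / INR k.+1)%R.

Lemma thr_gt k : (t < thr k)%R.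
Proof.
have : (0 < / INR k.+1)%R by apply: Rinv_0_lt_compat; apply: lt_0_INR; apply/ltP.
rewrite /thr; lra.
Qed.

Definition below k g := forall q, extends q g -> (f a q < thr k)%R.

Lemma below_rcons k g c : below k g -> below k (rcons g c).
Proof. by move=> B q /extends_rcons [E _]; apply: B. Qed.

Lemma below_prefix k q n m : n <= m -> below k (prefix q n) -> below k (prefix q m).
Proof.
move=> le B q' E; rewrite size_prefix in E; apply: B.
by rewrite size_prefix -(take_prefix q' le) E take_prefix.
Qed.

Lemma below_usc k q : (f a q < thr k)%R -> exists N, below k (prefix q N).
Proof.
move=> lt; have [N HN] := @f_usc a q (thr k - f a q)%R ltac:(lra).
exists N => q' E; rewrite size_prefix in E.
suff : (f a q' < f a q + (thr k - f a q))%R by lra.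
by apply: HN; apply: agree_below.
Qed.

Fixpoint attractor k n g : Prop := ~ secures a g t /\ (below k g \/
  match n with
  | 0 => False
  | m.+1 => (d g <> a /\ exists c, attractor k m (rcons g c)) \/
            (d g = a /\ forall c, attractor k m (rcons g c))
  end).

Lemma attractor_not_secures k n g : attractor k n g -> ~ secures a g t.
Proof. by case: n => [|n] []. Qed.

Lemma attractorS k n g : attractor k n g -> attractor k n.+1 g.
Proof.
elim: n g => [|n IH] g /= [nS H]; split=> //; first by case: H => [B|[]]; left.
case: H => [B|[[dg [c Hc]]|[dg Hc]]]; [by left | right; left | right; right].
  by split=> //; exists c; apply: IH.
by split=> // c; apply: IH.
Qed.

Lemma attractor_mono k n m g : n <= m -> attractor k n g -> attractor k m g.
Proof.
move=> le; rewrite -(subnK le); elim: (m - n) => [|j IH] //= H.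
exact: attractorS (IH H).
Qed.

Definition secured_from (g x : seq C) i := size g <= i <= size x /\ secures a (take i x) t.

Definition switch_strategy (g : seq C) (dflt : seq C -> C) (x : seq C) : C :=
  if excluded_middle_informative (exists i, secured_from g x i)
  then secure_strategy a t (take (least (secured_from g x)) x) x
  else dflt x.

Lemma switch_strategy_secures g dflt q : extends q g ->
  follows (fun b => b = a) (switch_strategy g dflt) g q ->
  (exists i, size g <= i /\ secures a (prefix q i) t) -> (t < f a q)%R.
Proof.
move=> E K ex; have [[le_g Si] min] := leastP ex; set i := least _ in le_g Si min.
apply: (secure_strategyP Si); first by rewrite size_prefix.
move=> n; rewrite size_prefix => le da; rewrite K //; last exact: leq_trans le_g le.
have secn : secured_from g (prefix q n) i by rewrite /secured_from size_prefix le_g le take_prefix.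
rewrite /switch_strategy.
destruct excluded_middle_informative as [?|nex]; last by case: nex; exists i.
suff -> : least (secured_from g (prefix q n)) = i by rewrite take_prefix.
apply: least_eq => // m lt [/andP [m1 m2]]; rewrite size_prefix in m2.
by rewrite take_prefix // => Sm; apply: (min m lt).
Qed.

Lemma switch_strategy_dflt g dflt x :
  (forall i, size g <= i <= size x -> ~ secures a (take i x) t) ->
  switch_strategy g dflt x = dflt x.
Proof.
move=> none; rewrite /switch_strategy.
destruct excluded_middle_informative as [[i [range Si]]|] => //.
by case: (none i range).
Qed.

Section Escape.
Variable k : nat.
Local Notation outside x := (forall n, ~ attractor k n x).

Lemma escape_own_child x : ~ secures a x t -> outside x -> d x = a ->
  exists c, outside (rcons x c).
Proof.
move=> nS out da; apply: NNPP => trapped.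
have [N HN] : exists N, forall c, attractor k N (rcons x c).
  apply: fin_uniform_bound => [c n m le|c]; first exact: attractor_mono.
  by apply: NNPP => nc; apply: trapped; exists c => n Fn; apply: nc; exists n.
by apply: (out N.+1); split=> //; right; right.
Qed.

Lemma escape_opp_child x c : ~ secures a x t -> outside x -> d x <> a -> outside (rcons x c).
Proof.
by move=> nS out na n Fn; apply: (out n.+1); split=> //; right; left; split=> //; exists c.
Qed.

Lemma attractor_of_not_secures g : ~ secures a g t -> exists n, attractor k n g.
Proof.
move=> nS; apply: NNPP => nF.
pose sg := switch_strategy g (fun x => epsilon inhC (fun c => outside (rcons x c))).
apply: nS; exists sg => q E K.
case: (classic (exists i, size g <= i /\ secures a (prefix q i) t)) => [|nsec].
  exact: switch_strategy_secures E K.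
have nS_at j : ~ secures a (prefix q (size g + j)) t.
  by move=> Sj; apply: nsec; exists (size g + j); split; first exact: leq_addr.
have out j : outside (prefix q (size g + j)).
  elim: j => [|j IH]; first by rewrite addn0 E => n Fn; apply: nF; exists n.
  rewrite addnS prefixS; case: (classic (d (prefix q (size g + j)) = a)) => [da|na].
    rewrite K ?leq_addr // /sg switch_strategy_dflt.
      exact: epsilon_spec (escape_own_child _ IH da).
    move=> i /andP [gi]; rewrite size_prefix => ij; rewrite take_prefix // => Si.
    by apply: nsec; exists i.
  exact: escape_opp_child.
case: (Rlt_le_dec (f a q) (thr k)) => [/below_usc [N BN]|]; last by have := thr_gt k; lra.
pose j := maxn N (size g) - size g.
have Bj : below k (prefix q (size g + j)).
  by rewrite subnKC ?leq_maxr //; apply: below_prefix (leq_maxl _ _) BN.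
by case: (out j 0); split; [exact: nS_at | left].
Qed.

End Escape.

(* The opponents stay in the attractor of the least level not yet reached and lower the rank;
   if the level stayed bounded, (level, rank) would descend lexicographically forever. *)
Definition level x := least (fun k => ~ below k x).
Definition rank x := least (fun r => attractor (level x) r x).
Definition descend x := epsilon inhC (fun c => attractor (level x) (rank x).-1 (rcons x c)).

Lemma descend_step x c : ~ secures a x t -> (exists k, ~ below k x) ->
  (d x <> a -> c = descend x) -> 0 < rank x /\ attractor (level x) (rank x).-1 (rcons x c).
Proof.
move=> nS exk hc; have [nB _] := leastP exk.
have [r Fr] := attractor_of_not_secures (level x) nS.
have Fx : attractor (level x) (rank x) x.
  exact: (leastP (ex_intro (fun r => attractor (level x) r x) r Fr)).1.
have rpos : 0 < rank x by move: Fx; case: (rank x) => // - [_ [B|[]]]; case: nB.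
have : attractor (level x) (rank x).-1.+1 x by case: (rank x) rpos Fx.
case=> _ [B|[[na [c' Hc']]|[_ Hc]]]; first by case: nB.
  split=> //; rewrite (hc na).
  apply: (epsilon_spec inhC (fun c => attractor (level x) (rank x).-1 (rcons x c))).
  by exists c'.
by split; last apply: Hc.
Qed.

Lemma level_le k x : ~ below k x -> level x <= k.
Proof. exact: least_le. Qed.

Lemma level_rcons x c : (exists k, ~ below k (rcons x c)) -> level x <= level (rcons x c).
Proof.
move=> ex; have [nB _] := leastP ex.
have [_ min] : ~ below (level x) x /\ forall j, j < level x -> ~ ~ below j x.
  by apply: leastP; case: ex => k nBk; exists k => Bk; apply/nBk/below_rcons.
rewrite leqNgt; apply/negP => lt; apply: (min _ lt) => B.
exact/nB/below_rcons.
Qed.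

Lemma rank_rcons x c : level (rcons x c) = level x -> 0 < rank x ->
  attractor (level x) (rank x).-1 (rcons x c) -> rank (rcons x c) < rank x.
Proof.
move=> e rpos F; rewrite -(prednK rpos) ltnS /rank e.
exact: least_le.
Qed.

Lemma caps_of_not_secures h : ~ secures a h t -> caps a h t.
Proof.
move=> nS; exists descend => q E K; apply: le_of_approx => k.
suff [n Bn] : exists n, below k (prefix q n) by apply: Bn; rewrite size_prefix.
apply: NNPP => nB.
pose x j := prefix q (size h + j).
have xS j : x j.+1 = rcons (x j) (q (size h + j)) by rewrite /x addnS prefixS.
have nBx j : ~ below k (x j) by move=> B; apply: nB; exists (size h + j).
have step j : ~ secures a (x j) t ->
    0 < rank (x j) /\ attractor (level (x j)) (rank (x j)).-1 (x j.+1).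
  move=> nSj; rewrite xS; apply: descend_step => // [|na]; first by exists k.
  exact: K (leq_addr _ _) na.
have nSx j : ~ secures a (x j) t.
  elim: j => [|j IH]; first by rewrite /x addn0 E.
  exact: attractor_not_secures (step j IH).2.
apply: (@no_lex_descent (fun j => level (x j)) (fun j => rank (x j)) k) => j.
- exact: level_le.
- by rewrite xS; apply: level_rcons; exists k; rewrite -xS.
- by move=> e; have [rpos Fj] := step j (nSx j); rewrite xS in e Fj *; exact: rank_rcons.
Qed.

Lemma secures_of_not_caps h : ~ caps a h t -> secures a h t.
Proof. by move=> nC; apply: NNPP => nS; apply/nC/caps_of_not_secures. Qed.

End Determinacy.

Definition same_caps a h h' := forall s, caps a h s <-> caps a h' s.
Definition open_value a h x := forall s, caps a h s <-> (x < s)%R.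
Definition value a h := epsilon (inhabits 0%R) (open_value a h).
Definition best_child a h :=
  epsilon inhC (fun c => forall c' s, caps a (rcons h c) s -> caps a (rcons h c') s).
Definition block_start a h :=
  least (fun m => m <= size h /\ forall j, m <= j <= size h -> same_caps a (take j h) h).

(* On the path the mover a keeps, when the opponents' best threshold x is not attained,
   the strategy securing more than x chosen at the start of the current block of nodes with
   the same thresholds; otherwise a moves to a child with the fewest thresholds. *)
Definition path_move (h : seq C) : C :=
  if excluded_middle_informative (exists x, open_value (d h) h x)
  then secure_strategy (d h) (value (d h) h) (take (block_start (d h) h) h) h
  else best_child (d h) h.

Definition path := play path_move.
Local Notation node n := (prefix path n).

Lemma open_value_unique a h x y : open_value a h x -> open_value a h y -> x = y.
Proof.
move=> Ox Oy; apply: Rle_antisym; apply: Rnot_lt_le => lt.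
  exact: Rlt_irrefl x ((Ox x).1 ((Oy x).2 lt)).
exact: Rlt_irrefl y ((Oy y).1 ((Ox y).2 lt)).
Qed.

Lemma open_value_same a h h' x : same_caps a h h' -> open_value a h' x -> open_value a h x.
Proof. by move=> T O s; rewrite T; apply: O. Qed.

Lemma best_childP a h c s : caps a (rcons h (best_child a h)) s -> caps a (rcons h c) s.
Proof.
pose le x y := forall s, caps a (rcons h x) s -> caps a (rcons h y) s.
have [m Hm] : exists m, forall c, le m c.
  apply: (fin_total_min c0) => [x y z xy yz r /xy/yz //|x y].
  by apply: up_closed_total => r r'; apply: caps_le.
exact: (epsilon_spec inhC (fun c => forall c', le c c') (ex_intro _ m Hm)).
Qed.

Definition is_block a m n := m <= n /\ (forall j, m <= j <= n -> same_caps a (node j) (node n)) /\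
  (m = 0 \/ ~ same_caps a (node m.-1) (node n)).

Lemma block_exists a n : exists m, is_block a m n.
Proof.
pose B m := m <= n /\ forall j, m <= j <= n -> same_caps a (node j) (node n).
have Bn : B n.
  split=> // j /andP [j1 j2] s; have -> : j = n by apply/eqP; rewrite eqn_leq j1 j2.
  exact: iff_refl.
have [[le T] min] := leastP (ex_intro B n Bn).
exists (least B); do 2 split=> //; case E : (least B) => [|m]; [by left | right => Tm].
apply: (min m); first by rewrite E.
split=> [|j]; first by apply: leq_trans le; rewrite E.
rewrite leq_eqVlt => /andP [/orP [/eqP <- //|lt] jn]; by apply: T; rewrite E lt.
Qed.

Lemma block_start_node a m n : is_block a m n -> block_start a (node n) = m.
Proof.
move=> [le [T M]]; apply: least_eq => [|m' lt [_ H]].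
  rewrite size_prefix; split=> // j /andP [j1 j2]; rewrite take_prefix //; apply: T.
  by rewrite j1.
case: M => [m0|nT]; first by rewrite m0 in lt.
have le' : m.-1 <= n by apply: leq_trans le; apply: leq_pred.
apply: nT; have := H m.-1; rewrite size_prefix take_prefix //; apply; rewrite le' andbT.
by case: m lt {le T H le'} => // m; rewrite ltnS.
Qed.

Lemma is_block_le a m n j : is_block a m n -> m <= j <= n -> is_block a m j.
Proof.
move=> [le [T M]] /andP [mj jn]; have Tj := T j (introT andP (conj mj jn)).
split=> //; split=> [i /andP [mi ij] s|].
  by rewrite (T i _ s) ?(Tj s) // mi (leq_trans ij jn).
by case: M => [->|nT]; [left | right => Tm; apply: nT => s; rewrite (Tm s) (Tj s)].
Qed.

Lemma path_move_open a m n x : is_block a m n -> d (node n) = a -> open_value a (node n) x ->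
  path n = secure_strategy a x (node m) (node n).
Proof.
move=> blk da O; rewrite /path prefix_play -/path /path_move da.
case: excluded_middle_informative => [ex|[]]; last by exists x.
have -> : value a (node n) = x.
  exact: open_value_unique (epsilon_spec _ _ ex) O.
by rewrite (block_start_node blk) take_prefix //; case: blk.
Qed.

Lemma path_on_block a m n x j : is_block a m n -> open_value a (node n) x ->
  m <= j <= n -> d (node j) = a -> path j = secure_strategy a x (node m) (node j).
Proof.
move=> blk O range da; have blk_j := is_block_le blk range.
apply: path_move_open => //; apply: open_value_same O.
by case: blk => _ [T _]; apply: T.
Qed.

Lemma secures_block a m n x : is_block a m n -> open_value a (node n) x ->
  secures_with a (secure_strategy a x (node m)) (node n.+1) x.
Proof.
move=> blk O; have [le [T _]] := blk.
have Om : open_value a (node m) x by apply: open_value_same O; apply: T; rewrite leqnn le.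
have Sm : secures a (node m) x.
  by apply: secures_of_not_caps => /(Om x); apply: Rlt_irrefl.
apply: secures_with_prefix (secure_strategyP Sm) _; first exact: leqW.
move=> j /andP [mj jn]; apply: path_on_block blk O _; by rewrite mj -ltnS.
Qed.

Lemma path_caps_mono a n s : caps a (node n.+1) s -> caps a (node n) s.
Proof.
rewrite prefixS; case: (classic (d (node n) = a)) => [da|na]; last exact: caps_opp_parent.
case: (classic (exists x, open_value a (node n) x)) => [[x O]|nO] Cs.
  have [m blk] := block_exists a n.
  apply/(O s); apply: Rnot_le_lt => le; apply: (not_caps_and_secures (caps_le Cs le)).
  by rewrite -prefixS; exists (secure_strategy a x (node m)); apply: secures_block.
have best : path n = best_child a (node n).
  rewrite /path prefix_play -/path /path_move da.
  by case: excluded_middle_informative.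
rewrite best in Cs.
apply: NNPP => nC; have [sg Ssg] := secures_of_not_caps nC.
apply: (not_caps_and_secures (best_childP (sg (node n)) Cs)).
by exists sg; apply: secures_with_child.
Qed.

Lemma path_caps_mono_le a n n' s : n <= n' -> caps a (node n') s -> caps a (node n) s.
Proof.
move=> le; rewrite -(subnKC le); elim: (n' - n) => [|k IH]; first by rewrite addn0.
by rewrite addnS => /path_caps_mono.
Qed.

Lemma path_caps_above a s : (f a path < s)%R -> forall n, caps a (node n) s.
Proof.
move=> lt n; have [N HN] := caps_eventually lt.
by apply: (@path_caps_mono_le _ _ (maxn n N)); [exact: leq_maxl | apply: HN; exact: leq_maxr].
Qed.

Lemma path_caps_payoff a n : caps a (node n) (f a path).
Proof.
apply: NNPP => nC; set t := f a path in nC.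
have [nCm min] := leastP (ex_intro (fun j => ~ caps a (node j) t) n nC).
set m := least _ in nCm min.
have open j : m <= j -> open_value a (node j) t.
  move=> le s; split=> [Cs|lt]; last exact: path_caps_above.
  apply: Rnot_le_lt => le_s; apply/nCm/(path_caps_mono_le le); exact: caps_le Cs le_s.
suff : (t < f a path)%R by apply: Rlt_irrefl.
apply: (secure_strategyP (secures_of_not_caps nCm)); first by rewrite size_prefix.
move=> j; rewrite size_prefix => le da.
have blk : is_block a m j.
  split=> //; split=> [i /andP [mi _] s|]; first by rewrite (open i mi s) (open j le s).
  case E : m => [|m']; [by left | right => /(_ t) Tm].
  apply: (min m'); first by rewrite E.
  by move=> /Tm /(open j le t); apply: Rlt_irrefl.
by apply: path_on_block blk (open j le) _ da; rewrite leqnn le.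
Qed.

Definition punish b h := epsilon inh_strategy (fun tau => caps_with b tau h (f b path)).
Definition divergence (g : seq C) := least (fun i => i < size g /\ nth c0 g i <> path i).

Definition equilibrium (g : seq C) : C :=
  if g == node (size g) then path_move g
  else let i := divergence g in punish (d (take i g)) (rcons (take i g) (nth c0 g i)) g.

Lemma equilibrium_on_path n : equilibrium (node n) = path n.
Proof. by rewrite /equilibrium size_prefix eqxx /path prefix_play. Qed.

Lemma play_equilibrium : play equilibrium = path.
Proof.
have nodes n : prefix (play equilibrium) n = node n.
  by elim: n => [|n IH] //; rewrite !prefixS IH prefix_play IH equilibrium_on_path.
by apply: functional_extensionality => n; rewrite prefix_play nodes equilibrium_on_path.
Qed.

Lemma equilibrium_off_path g i : i < size g -> take i g = node i -> nth c0 g i <> path i ->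
  equilibrium g = punish (d (node i)) (rcons (node i) (nth c0 g i)) g.
Proof.
move=> lt Ei ne; rewrite /equilibrium.
have -> : (g == node (size g)) = false.
  by apply/negP => /eqP Eg; apply: ne; rewrite Eg nth_prefix // -Eg.
suff -> : divergence g = i by rewrite Ei.
apply: least_eq => // m lt_mi [_]; apply.
by rewrite -(nth_take _ lt_mi) Ei nth_prefix.
Qed.

Lemma deviate_other (sigma : seq C -> C) a (s : strategy d a) h :
  d h <> a -> deviate sigma s h = sigma h.
Proof. by rewrite /deviate; case: eqP. Qed.

Lemma deviation_payoff a (s : strategy d a) : (f a (play (deviate equilibrium s)) <= f a path)%R.
Proof.
set q := play (deviate equilibrium s).
have qstep n : q n = deviate equilibrium s (prefix q n) := prefix_play _ n.
case: (classic (q = path)) => [->|neq]; first exact: Rle_refl.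
have [n0 [E0 qn0]] := first_divergence neq.
have dn0 : d (node n0) = a.
  apply: NNPP => na; apply: qn0; by rewrite qstep deviate_other E0 ?equilibrium_on_path.
have Cq : caps a (prefix q n0.+1) (f a path).
  by rewrite prefixS E0; apply: caps_own_child dn0 (path_caps_payoff a n0).
apply: (epsilon_spec inh_strategy _ Cq); first by rewrite size_prefix.
move=> n; rewrite size_prefix => lt na; rewrite qstep deviate_other //.
rewrite (@equilibrium_off_path _ n0) ?size_prefix ?take_prefix ?nth_prefix ?(ltnW lt) //.
by rewrite dn0 prefixS E0.
Qed.

Lemma equilibrium_nash : nash_equilibrium d f equilibrium.
Proof. by move=> [a [s]]; rewrite play_equilibrium; apply/Rle_not_lt/deviation_payoff. Qed.

End Game.

Theorem corollary29 (A : countType) (C : finType) (a0 : A) (c0 : C)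
  (d : seq C -> A) (f : A -> (nat -> C) -> R)
  (f_range : forall (a : A) (p : nat -> C), (0 <= f a p <= 1)%R)
  (f_usc : forall a : A, usc_cantor (f a)) :
  exists sigma : seq C -> C, nash_equilibrium d f sigma.
Proof. by exists (equilibrium c0 d f); apply: equilibrium_nash. Qed.
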